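(* Let $n\ge\ell\ge1$ and consider the saturation SQGT model with $s=\ell$ thresholds $\underline{\eta}=(1,\dots,\ell)$ (outcome of $y$ is $\min(y,\ell)$). Let $k=\lceil\log_{\ell+1}(n-\ell+1)\rceil$. Let $w_0$ be the infinite sequence $0^{\ell}\,(1^{\ell+1}0^{\ell+1})(1^{\ell+1}0^{\ell+1})\cdots$ and, for $1\le j\le k-1$, let $w_j=p(c_j)p(c_j)\cdots$ be the infinite periodic sequence of the word $p(c_j)$, where $c_j=\frac{(\ell+1)^j-1}{\ell}$ and $$p(c)=o(0)^{c}\,0\,o(1)^{c}\cdots0\,o(\ell)^{c}\;1\,u(\ell)^{c}\;1\,u(\ell-1)^{c}\cdots1\,u(0)^{c}\;0,$$ with $o(x)=0^{\ell-x}1^x$, $u(x)=1^x0^{\ell-x}$. Let $\mathbf{M}$ be the $k\times n$ binary matrix whose rows are the first $n$ entries of $w_{k-1},\dots,w_1,w_0$. Then $\mathbf{M}$ solves $\mathrm{Burst}(n,\ell,\underline{\eta})$: for all distinct $i,j\in\{0,\dots,n-\ell\}$, $\min(\mathbf{M}\mathbf{b}_i,\ell)\neq\min(\mathbf{M}\mathbf{b}_j,\ell)$ (entrywise minimum). In particular $\mathrm{Burst}(n,\ell,\underline{\eta})$ can be solved with $\lceil\log_{\ell+1}(n-\ell+1)\rceil$ measurements.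
   Context: Items are indexed $0,\dots,n-1$; $\mathbf{b}_i\in\{0,1\}^n$ is the burst of length $\ell$ with head $i$ (coordinates $i,\dots,i+\ell-1$ equal to $1$, others $0$). $w^c$ denotes the concatenation of $c$ copies of the word $w$. A matrix solves $\mathrm{Burst}(n,\ell,\underline{\eta})$ if distinct length-$\ell$ bursts yield distinct outcome vectors. *)

From mathcomp Require Import all_boot.
Set Implicit Arguments. Unset Strict Implicit. Unset Printing Implicit Defensive.

(* Binary words are seq nat with entries in {0,1}; infinite sequences are nat -> nat. *)
Definition rep (c : nat) (w : seq nat) : seq nat := flatten (nseq c w).

Definition o_word (l x : nat) : seq nat := nseq (l - x) 0 ++ nseq x 1.
Definition u_word (l x : nat) : seq nat := nseq x 1 ++ nseq (l - x) 0.

Definition p_word (l c : nat) : seq nat :=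
  rep c (o_word l 0)
  ++ flatten [seq 0 :: rep c (o_word l x) | x <- iota 1 l]
  ++ flatten [seq 1 :: rep c (u_word l x) | x <- rev (iota 0 l.+1)]
  ++ [:: 0].

Definition c_j (l j : nat) : nat := ((l.+1) ^ j - 1) %/ l.

Definition w0 (l : nat) (t : nat) : nat :=
  if t < l then 0 else if (t - l) %% (2 * l.+1) < l.+1 then 1 else 0.

Definition w_seq (l j : nat) (t : nat) : nat :=
  if j == 0 then w0 l t
  else let pw := p_word l (c_j l j) in nth 0 pw (t %% size pw).

Definition kmeas (n l : nat) : nat := up_log l.+1 (n - l + 1).

Definition Mmat (n l : nat) (r : 'I_(kmeas n l)) (t : 'I_n) : nat :=
  w_seq l (kmeas n l - 1 - r) t.

Definition burst (n l i : nat) (t : 'I_n) : nat := (i <= t) && (t < i + l).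

Definition outcome (n l i : nat) : {ffun 'I_(kmeas n l) -> nat} :=
  [ffun r => minn (\sum_(t < n) Mmat r t * burst l i t) l].

From mathcomp Require Import all_boot zify.
Set Implicit Arguments. Unset Strict Implicit. Unset Printing Implicit Defensive.

(* Proof idea (a reflected Gray code in base l+1).  Write P = 2(l+1) and call
   zigzag l m = m for m <= l, 2l+1-m for l < m < P, the triangular wave.

   1. Every row w_j of M, read from the 1-based position s = t+1, is a
      function row N l s of s with N = (l+1)^j = c*l+1: s lies in block
      s/N of phase q = (s/N) mod P at offset r = s mod N; offset 0 holds the
      separator bit [l < q] and offset r >= 1 holds bit (r-1) mod l of the
      phase word (o(q) in the ascending half q <= l, u(2l+1-q) in the
      descending half).  For j >= 1 this is read off the block decomposition
      of the period word p(c_j); for j = 0 it is the definition of w_0.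
   2. Sliding a burst one step to the right changes its sum under such a row
      exactly as zigzag changes between consecutive phases, so the
      (unsaturated) burst sum at head i equals zigzag l ((i/N) mod P) <= l.
   3. These zigzag values for N = 1, l+1, ..., (l+1)^(k-1) are the digits of
      the reflected (l+1)-ary Gray code of i, which determine every i with
      i < (l+1)^k; k = kmeas n l is chosen so that all heads i <= n-l fit. *)

(* Repeated boolean case analysis followed by linear arithmetic: closes the
   finite case distinctions on phases and offsets. *)
Ltac case_lia :=
  repeat (match goal with
  | |- context [if ?b then _ else _] =>
      lazymatch b with context [if _ then _ else _] => fail | _ => idtac end;
      case: (boolP b) => ?
  | |- context [nat_of_bool ?b] =>
      lazymatch b with context [if _ then _ else _] => fail | _ => idtac end;
      case: (boolP b) => ?
  end; rewrite /= ?addn0 ?add0n); lia.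

Lemma modn_lt_double d a : a < 2 * d -> a %% d = if a < d then a else a - d.
Proof.
move=> a_lt; case: ltnP => a_ge; first by rewrite modn_small.
have -> : a = 1 * d + (a - d) by lia.
rewrite modnMDl modn_small; lia.
Qed.

Lemma divn_block N m r : r < N -> (m * N + r) %/ N = m.
Proof. by move=> r_lt; rewrite divnMDl ?divn_small ?addn0 //; lia. Qed.

Lemma modn_succ d m : m.+1 %% d = (m %% d).+1 %% d.
Proof. by rewrite -addn1 -modnDml addn1. Qed.

Definition zigzag (l m : nat) : nat := if m <= l then m else 2 * l + 1 - m.

(* Bit a < l of the phase word of phase q: o(q) = 0^(l-q) 1^q when q <= l,
   u(2l+1-q) = 1^(2l+1-q) 0^(q-l-1) otherwise. *)
Definition phase_bit (l q a : nat) : bool :=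
  if q <= l then l - q <= a else a < 2 * l + 1 - q.

Definition row_at (l q r : nat) : bool :=
  if r == 0 then l < q else phase_bit l q (r.-1 %% l).

(* Bit at 1-based position s of the row with block length N. *)
Definition row (N l s : nat) : bool := row_at l ((s %/ N) %% (2 * l.+1)) (s %% N).

Section Phases.
Variable l : nat.
Hypothesis l_gt0 : 0 < l.
Local Notation P := (2 * l.+1).

Lemma row_blockE N m r : r < N -> row N l (m * N + r) = row_at l (m %% P) r.
Proof. by move=> r_lt; rewrite /row divn_block // modnMDl (modn_small r_lt). Qed.

(* Bit a of phase q is the bit at offset a of the next phase's block: the
   ones of o(q) and u(x) move by one position from each phase to the next. *)
Lemma phase_bit_next q a : q < P -> a < l -> phase_bit l q a = row_at l (q.+1 %% P) a.
Proof.
move=> q_lt a_lt; rewrite modn_lt_double; last lia.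
rewrite /row_at /phase_bit; case: a a_lt => [|a] a_lt /=; first by case_lia.
by rewrite modn_small; case_lia.
Qed.

Lemma zigzag_next q : q < P ->
  zigzag l q + row_at l (q.+1 %% P) l = zigzag l (q.+1 %% P) + row_at l (q.+1 %% P) 0.
Proof.
move=> q_lt; rewrite modn_lt_double; last lia.
rewrite /row_at /phase_bit /zigzag /= (modn_small (_ : l.-1 < l)); last lia.
have -> : (l == 0) = false by lia.
case_lia.
Qed.

Lemma zigzag_next_unit q : q < P ->
  zigzag l q + row_at l ((q + l.+1) %% P) 0 = zigzag l (q.+1 %% P) + row_at l (q.+1 %% P) 0.
Proof.
move=> q_lt; rewrite !modn_lt_double; try lia.
rewrite /row_at /zigzag /=; case_lia.
Qed.

Lemma window_step_unit s : 0 < s ->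
  zigzag l ((s.-1 %/ 1) %% P) + row 1 l (s + l) = zigzag l ((s %/ 1) %% P) + row 1 l s.
Proof.
case: s => // m _; rewrite !divn1 /=.
have rowE x : row 1 l x = row_at l (x %% P) 0.
  by have := @row_blockE 1 x 0 isT; rewrite muln1 addn0.
rewrite !rowE modn_succ addSnnS -modnDml.
by apply: zigzag_next_unit; rewrite ltn_pmod.
Qed.

(* One sliding step over the row with N = c*l+1, c > 0: write s-1 = m*N + b*l + a;
   the window stays in block m (b < c-1), starts at a separator (b = c), or
   crosses into block m+1 (b = c-1). *)
Lemma window_step_block c s : 0 < c -> 0 < s ->
  zigzag l ((s.-1 %/ (c * l + 1)) %% P) + row (c * l + 1) l (s + l)
  = zigzag l ((s %/ (c * l + 1)) %% P) + row (c * l + 1) l s.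
Proof.
set N := c * l + 1 => c_gt0 s_gt0.
have defN : N = c * l + 1 by [].
clearbody N.
have N_gt0 : 0 < N by lia.
have [m [b [a [def_s off_lt a_lt]]]] :
    exists m b a, [/\ s = m * N + (b * l + a).+1, b * l + a < N & a < l].
  exists (s.-1 %/ N), ((s.-1 %% N) %/ l), ((s.-1 %% N) %% l).
  rewrite -divn_eq addnS -divn_eq ltn_pmod // ltn_pmod //; split => //; lia.
have b_le_c : b <= c by rewrite -(leq_pmul2r l_gt0); lia.
have l_lt_N : l < N by rewrite defN addn1 ltnS leq_pmull.
have phase_lt : m %% P < P by rewrite ltn_pmod.
have row_at_succ q x : row_at l q x.+1 = phase_bit l q (x %% l) by [].
have -> : s.-1 = m * N + (b * l + a) by lia.
rewrite def_s (divn_block _ off_lt).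
case: (ltngtP b.+1 c) => b_vs_c.
- have b2_le : b.+2 * l <= c * l by rewrite leq_mul2r b_vs_c orbT.
  rewrite !mulSn in b2_le.
  have -> : m * N + (b * l + a).+1 + l = m * N + (b.+1 * l + a).+1 by rewrite mulSn; lia.
  rewrite divn_block; last by lia.
  rewrite !row_blockE ?row_at_succ ?modnMDl //; rewrite ?mulSn; lia.
- have b_eq_c : b = c by lia.
  subst b; have a_eq0 : a = 0 by lia.
  subst a.
  have -> : m * N + (c * l + 0).+1 = m.+1 * N + 0 by rewrite mulSn; lia.
  have -> : m.+1 * N + 0 + l = m.+1 * N + l by lia.
  rewrite !divn_block ?row_blockE // modn_succ.
  by rewrite zigzag_next.
- have defN' : N = l + b * l + 1 by rewrite defN -b_vs_c mulSn.
  have -> : m * N + (b * l + a).+1 + l = m.+1 * N + a by rewrite mulSn; lia.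
  rewrite divn_block ?row_blockE ?row_at_succ ?modnMDl; try lia.
  by rewrite modn_succ (modn_small a_lt) (phase_bit_next phase_lt a_lt).
Qed.

Lemma window_step c s : 0 < s ->
  zigzag l ((s.-1 %/ (c * l + 1)) %% P) + row (c * l + 1) l (s + l)
  = zigzag l ((s %/ (c * l + 1)) %% P) + row (c * l + 1) l s.
Proof.
case: c => [|c] s_gt0; last exact: window_step_block.
by rewrite mul0n add0n; apply: window_step_unit.
Qed.

Lemma row_head c s : 0 < s -> s <= l -> row (c * l + 1) l s = false.
Proof.
move=> s_gt0 s_le; rewrite /row /row_at.
case: c => [|c]; first by rewrite mul0n add0n divn1 modn1 modn_small /=; lia.
have s_lt : s < c.+1 * l + 1 by rewrite mulSn; lia.
rewrite divn_small // mod0n modn_small // /phase_bit.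
have := ltn_pmod s.-1 l_gt0; case_lia.
Qed.

Lemma window_sum c i :
  \sum_(i <= t < i + l) row (c * l + 1) l t.+1 = zigzag l ((i %/ (c * l + 1)) %% P).
Proof.
elim: i => [|i IH].
  rewrite add0n div0n mod0n big_nat_cond big1 // => t /andP [/andP [_ ht] _].
  by rewrite row_head.
have step := window_step c (ltn0Sn i); rewrite /= addSn in step.
set F := fun t => nat_of_bool (row (c * l + 1) l t.+1).
have grow_right := @big_nat_recr nat 0 addn (i + l) i F (leq_addr l i).
have shrink_left := @big_ltn nat 0 addn i (i + l).+1 F (leq_addr l i).
rewrite shrink_left IH in grow_right; rewrite addSn.
rewrite /F /= in grow_right *; lia.
Qed.

End Phases.

Section UniformFlatten.
Variables (T : eqType) (x0 : T) (L : nat) (ss : seq (seq T)).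
Hypothesis size_ss : {in ss, forall s, size s = L}.

Lemma size_flatten_uniform : size (flatten ss) = size ss * L.
Proof.
rewrite size_flatten /shape; have /all_pred1P -> : all (pred1 L) (map size ss).
  by rewrite all_map; apply/allP => s /size_ss /= ->.
by rewrite sumn_nseq size_map mulnC.
Qed.

Lemma nth_flatten_uniform k : k < size ss * L ->
  nth x0 (flatten ss) k = nth x0 (nth [::] ss (k %/ L)) (k %% L).
Proof.
elim: ss size_ss k => [|s ss' IH] size_s k; first by rewrite mul0n.
have [size_s1 size_ss'] : size s = L /\ {in ss', forall s, size s = L}.
  by split=> [|t t_in]; apply: size_s; rewrite inE ?eqxx ?t_in ?orbT.
rewrite /= nth_cat size_s1 mulSn => k_lt.
have L_gt0 : 0 < L by move: k_lt; case: (posnP L) => [->|] //; rewrite muln0.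
have [k_small | k_big] := ltnP k L; first by rewrite divn_small // modn_small.
rewrite (IH size_ss'); last lia.
have def_k : k = 1 * L + (k - L) by lia.
by rewrite [in RHS]def_k divnMDl // modnMDl add1n.
Qed.

End UniformFlatten.

Lemma size_in_nseq (w : seq nat) c : {in nseq c w, forall s, size s = size w}.
Proof. by move=> s /nseqP [->]. Qed.

Lemma size_rep c (w : seq nat) : size (rep c w) = c * size w.
Proof. by rewrite (size_flatten_uniform (@size_in_nseq w c)) size_nseq. Qed.

Lemma nth_rep c w k : k < c * size w -> nth 0 (rep c w) k = nth 0 w (k %% size w).
Proof.
move=> k_lt; rewrite (nth_flatten_uniform _ (@size_in_nseq w c)) ?size_nseq //.
by rewrite nth_nseq ltn_divLR ?k_lt //; case: (size w) k_lt; rewrite ?muln0.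
Qed.

Definition phase_word (l q : nat) : seq nat :=
  if q <= l then o_word l q else u_word l (2 * l + 1 - q).
Definition block_word (l c q : nat) : seq nat := nat_of_bool (l < q) :: rep c (phase_word l q).

Section Words.
Variable l : nat.
Hypothesis l_gt0 : 0 < l.
Local Notation P := (2 * l.+1).

Lemma size_phase_word q : size (phase_word l q) = l.
Proof. by rewrite /phase_word /o_word /u_word; case: ifP; rewrite size_cat !size_nseq; lia. Qed.

Lemma nth_phase_word q a : a < l -> nth 0 (phase_word l q) a = phase_bit l q a.
Proof.
move=> a_lt; rewrite /phase_word /phase_bit /o_word /u_word.
case: ifP => _; rewrite nth_cat size_nseq !nth_nseq; case_lia.
Qed.

Lemma size_block_word c q : size (block_word l c q) = c * l + 1.
Proof. by rewrite /= size_rep size_phase_word addn1. Qed.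

Lemma nth_block_word c q r : r < c * l + 1 -> nth 0 (block_word l c q) r = row_at l q r.
Proof.
case: r => [|r] r_lt //=.
by rewrite nth_rep size_phase_word ?nth_phase_word ?ltn_pmod //; lia.
Qed.

(* The descending half enumerates x = l, ..., 0 as x = 2l+1-q, q = l+1, ..., 2l+1. *)
Lemma rev_iota_phases : rev (iota 0 l.+1) = map (subn (2 * l + 1)) (iota l.+1 l.+1).
Proof.
apply: (@eq_from_nth _ 0) => [|k]; rewrite size_rev ?size_map !size_iota // => k_lt.
by rewrite nth_rev ?size_iota // (nth_map 0) ?size_iota // !nth_iota //; lia.
Qed.

Lemma p_word_blocks c :
  0 :: p_word l c = flatten [seq block_word l c q | q <- iota 0 P] ++ [:: 0].
Proof.
have ascending : [seq block_word l c q | q <- iota 1 l]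
                 = [seq 0 :: rep c (o_word l x) | x <- iota 1 l].
  apply/eq_in_map => x; rewrite mem_iota /block_word /phase_word => x_in.
  have x_le : x <= l by lia.
  by rewrite x_le ltnNge x_le.
have descending : [seq block_word l c q | q <- iota l.+1 l.+1]
                  = [seq 1 :: rep c (u_word l x) | x <- rev (iota 0 l.+1)].
  rewrite rev_iota_phases -map_comp; apply/eq_in_map => q.
  rewrite mem_iota /block_word /phase_word => q_in /=.
  have l_lt : l < q by lia.
  by rewrite l_lt leqNgt l_lt.
have -> : P = 1 + l + l.+1 by lia.
rewrite !iotaD !map_cat !flatten_cat ascending descending -!catA /=.
by rewrite /p_word /block_word /phase_word leq0n.
Qed.

Lemma size_in_blocks c :
  {in [seq block_word l c q | q <- iota 0 P], forall s, size s = c * l + 1}.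
Proof. by move=> s /mapP [q _ ->]; apply: size_block_word. Qed.

Lemma size_p_word c : size (p_word l c) = P * (c * l + 1).
Proof.
have := congr1 size (p_word_blocks c).
by rewrite size_cat (size_flatten_uniform (@size_in_blocks c)) size_map size_iota /=; lia.
Qed.

Lemma nth_p_word c u : u < P * (c * l + 1) -> nth 0 (p_word l c) u = row (c * l + 1) l u.+1.
Proof.
set N := c * l + 1 => u_lt; have N_gt0 : 0 < N by rewrite /N addn1.
have -> : nth 0 (p_word l c) u = nth 0 (0 :: p_word l c) u.+1 by [].
rewrite p_word_blocks nth_cat (size_flatten_uniform (@size_in_blocks c)) size_map size_iota.
have [s_lt | s_ge] := ltnP u.+1 (P * N).
  have q_lt : u.+1 %/ N < P by rewrite ltn_divLR.
  rewrite (nth_flatten_uniform _ (@size_in_blocks c)) ?size_map ?size_iota //.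
  rewrite (nth_map 0) ?size_iota // nth_iota // add0n nth_block_word ?ltn_pmod //.
  by rewrite /row (modn_small q_lt).
have -> : u.+1 = P * N by apply/eqP; rewrite eqn_leq s_ge u_lt.
by rewrite subnn /row mulnK // modnn modnMl.
Qed.

Lemma row_periodic N s : 0 < N -> row N l s = row N l (s %% (P * N)).
Proof.
move=> N_gt0; rewrite /row {1 2}(divn_eq s (P * N)) mulnA.
by rewrite divnMDl // !modnMDl.
Qed.

(* (l+1)^j = c_j*l + 1, so the block length of w_j is (l+1)^j. *)
Lemma exp_succ_c_j j : l.+1 ^ j = c_j l j * l + 1.
Proof.
rewrite /c_j; have [c ->] : exists c, l.+1 ^ j = c * l + 1.
  elim: j => [|j [c IH]]; first by exists 0.
  by exists (c * l + c + 1); rewrite expnS IH; nia.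
by rewrite addnK mulnK.
Qed.

Lemma w0_row t : w0 l t = row 1 l t.+1.
Proof.
rewrite /w0 /row divn1 modn1 /row_at /=.
have [t_lt | t_ge] := ltnP t l; first by rewrite modn_small //; lia.
have -> : t.+1 = t - l + l.+1 by lia.
have x_lt : (t - l) %% P < P by rewrite ltn_pmod.
rewrite -modnDml; move: ((t - l) %% _) x_lt => x x_lt.
rewrite modn_lt_double; last lia.
case_lia.
Qed.

Lemma w_seq_row j t : w_seq l j t = row (l.+1 ^ j) l t.+1.
Proof.
rewrite /w_seq; case: eqP => [-> | _]; first exact: w0_row.
rewrite exp_succ_c_j size_p_word nth_p_word ?ltn_pmod ?muln_gt0 ?addn1 //.
rewrite (row_periodic (t %% _).+1) ?(row_periodic t.+1) ?addn1 //.
by rewrite -[(t %% _).+1]addn1 modnDml addn1.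
Qed.
End Words.

Lemma mod_double_digit b m : m %% (2 * b) = odd (m %/ b) * b + m %% b.
Proof.
case: (posnP b) => [-> | b_gt0]; first by rewrite muln0 !modn0 divn0 muln0.
rewrite {1}(divn_eq m b); have := ltn_pmod m b_gt0.
move: (m %/ b) (m %% b) => q r r_lt; rewrite -{1}[q]odd_double_half -muln2.
rewrite mulnDl -mulnA addnAC addnC modnMDl modn_small //.
by case: odd; lia.
Qed.

Lemma zigzag_mod_double l m :
  zigzag l (m %% (2 * l.+1)) = if odd (m %/ l.+1) then l - m %% l.+1 else m %% l.+1.
Proof.
rewrite mod_double_digit /zigzag; have := ltn_pmod m (ltn0Sn l).
by case: odd; rewrite ?mul1n ?mul0n ?add0n; case_lia.
Qed.

Lemma zigzag_digits_inj l k i i' : i < l.+1 ^ k -> i' < l.+1 ^ k ->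
  (forall j, j < k -> zigzag l ((i %/ l.+1 ^ j) %% (2 * l.+1))
                    = zigzag l ((i' %/ l.+1 ^ j) %% (2 * l.+1))) ->
  i = i'.
Proof.
elim: k i i' => [|k IH] i i' i_lt i'_lt same_digits.
  by rewrite expn0 in i_lt i'_lt; lia.
have high_eq : i %/ l.+1 = i' %/ l.+1.
  apply: IH; rewrite ?ltn_divLR -?expnSr // => j j_lt.
  by have := same_digits j.+1 j_lt; rewrite expnS !divnMA.
have low_eq : i %% l.+1 = i' %% l.+1.
  have := same_digits 0 (ltn0Sn k); rewrite expn0 !divn1 !zigzag_mod_double high_eq.
  have := ltn_pmod i (ltn0Sn l); have := ltn_pmod i' (ltn0Sn l).
  by case: odd; lia.
by rewrite (divn_eq i l.+1) (divn_eq i' l.+1) high_eq low_eq.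
Qed.

Lemma sum_burst n l i (F : nat -> nat) : i + l <= n ->
  \sum_(t < n) F t * burst l i t = \sum_(i <= t < i + l) F t.
Proof.
move=> i_le; rewrite (@big_nat_widenl _ _ _ i 0) // (@big_nat_widen _ _ _ 0 (i + l) n) //.
rewrite big_mkcond big_mkord; apply: eq_bigr => t _ /=.
by rewrite /burst; case: (_ && _); rewrite ?muln1 ?muln0.
Qed.

(* zigzag never exceeds l, so saturation at l is invisible. *)
Lemma zigzag_le l m : zigzag l m <= l.
Proof. by rewrite /zigzag; case_lia. Qed.

Lemma outcome_entry n l i (r : 'I_(kmeas n l)) : 0 < l -> i + l <= n ->
  outcome n l i r = zigzag l ((i %/ l.+1 ^ (kmeas n l - 1 - r)) %% (2 * l.+1)).
Proof.
move=> l_gt0 i_le; rewrite /outcome ffunE /Mmat sum_burst //.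
set J := kmeas n l - 1 - r.
rewrite (eq_bigr (fun t => nat_of_bool (row (l.+1 ^ J) l t.+1))); last first.
  by move=> t _; apply: w_seq_row.
by rewrite exp_succ_c_j // (window_sum l_gt0 (c_j l J) i); apply/minn_idPl; apply: zigzag_le.
Qed.

Theorem mainTheorem4 (n l : nat) :
  1 <= l -> l <= n ->
  forall i j : nat, i <= n - l -> j <= n - l -> i <> j ->
  outcome n l i <> outcome n l j.
Proof.
move=> l_gt0 l_le i j i_le j_le i_neq_j same_outcome; apply: i_neq_j.
set k := kmeas n l.
have fits : n - l + 1 <= l.+1 ^ k by apply: up_logP.
apply: (@zigzag_digits_inj l k); [lia | lia | move=> e e_lt].
have row_lt : k - 1 - e < k by lia.
have := congr1 (fun f : {ffun 'I_k -> nat} => f (Ordinal row_lt)) same_outcome.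
rewrite /= !outcome_entry //; try lia.
by have -> : k - 1 - (k - 1 - e) = e by lia.
Qed.
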